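(* Let $\{(G_n,\Psi_n,\varphi^L_n,\varphi^U_n)\}_{n\ge0}$ be an $\mathcal{F}$-system (with $\varphi^U_n>0$) satisfying Condition $\Gamma$, with induced Cantor system $(X,H_X)$ and limit function $\varphi^U$. Define $s:X\to\mathbb{R}$ by $s(x)=\lim_{n\to\infty}s_n(x(n),H_X(x)(n))$. Then $s$ is continuous, $s>0$, and whenever $\varphi^U(x)\ne0$ we have $s(x)=\varphi^U(H_X(x))/\varphi^U(x)$.
   Context: An $\mathcal{F}$-system consists of: finite directed graphs $G_n$ ($n\ge0$), each vertex having at least one outgoing and one incoming edge; surjective maps $\Psi_n:G_{n+1}\to G_n$ sending edges to edges; such that (i) for each $n$ and $v\in G_n$ there are $m>n$ and distinct $v',v''\in G_{m+1}$ with $\Psi_n\circ\cdots\circ\Psi_m(v')=\Psi_n\circ\cdots\circ\Psi_m(v'')=v$; (ii) for every $m$ there is $n>m$ such that for every $g\in G_n$ the set $\{\Psi_m\circ\cdots\circ\Psi_{n-1}(g'):\overrightarrow{gg'}\in G_n\}$ has exactly one element; and maps $\varphi^L_n,\varphi^U_n:G_n\to[0,1]$ with $\varphi^L_n\le\varphi^U_n$, $\varphi^U_{n+1}(v')\le\varphi^U_n(\Psi_n(v'))$, $\varphi^L_{n+1}(v')\ge\varphi^L_n(\Psi_n(v'))$, and such that for every $g\in G_n$ there is $g'\in G_{n+1}$ with $\Psi_n(g')=g$, $\varphi^L_{n+1}(g')=\varphi^L_n(g)$, $\varphi^U_{n+1}(g')=\varphi^U_n(g)$. $X=\{x\in\prod_n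 G_n: x(n)=\Psi_n(x(n+1))\ \forall n\}$ (a Cantor space) and $H_X:X\to X$ is the continuous surjection whose graph is $\{(x,y)\in X^2:\overrightarrow{x(n)y(n)}\in G_n\ \forall n\}$. $\varphi^U(x)=\lim_n\varphi^U_n(x(n))$. For $u,v\in G_n$, $s_n(u,v)=\varphi^U_n(v)/\varphi^U_n(u)$. For an edge $\overrightarrow{uv}\in G_n$, $\Gamma_n(\overrightarrow{uv})=\max\{|s_n(v,u)-s_{n+1}(v',u')|,|s_n(u,v)-s_{n+1}(u',v')| : \overrightarrow{u'v'}\in G_{n+1},\Psi_n(u')=u,\Psi_n(v')=v\}$, $\Gamma_n=\max_{\overrightarrow{uv}}\Gamma_n(\overrightarrow{uv})$; Condition $\Gamma$ means $\sum_n\Gamma_n<1$. *)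

From mathcomp Require Import all_boot all_order all_algebra.
From mathcomp Require Import all_classical all_reals all_analysis.
Set Implicit Arguments. Unset Strict Implicit. Unset Printing Implicit Defensive.
Import Order.TTheory GRing.Theory Num.Theory numFieldNormedType.Exports.
Local Open Scope ring_scope.
Local Open Scope classical_set_scope.

Section FSystem.
Variable R : realType.
Variable V : nat -> finType.
Variable E : forall n, rel (V n).
Variable Psi : forall n, V n.+1 -> V n.
Variables phiL phiU : forall n, V n -> R.

Fixpoint proj (n k : nat) : V (Nat.add k n) -> V n :=
  match k return V (Nat.add k n) -> V n with
  | 0 => fun v => v
  | S k' => fun v => @proj n k' (@Psi (Nat.add k' n) v)
  end.
Arguments proj n k : clear implicits.

Definition Fsystem : Prop :=
  (forall n (v : V n), exists w, E v w) /\
  (forall n (v : V n), exists u, E u v) /\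
  (forall n (v : V n), exists v' : V n.+1, Psi v' = v) /\
  (forall n (u v : V n.+1), E u v -> E (Psi u) (Psi v)) /\
  (forall n (u v : V n), E u v ->
     exists u' v' : V n.+1, [/\ E u' v', Psi u' = u & Psi v' = v]) /\
  (* condition (i): m > n, v', v'' in G_{m+1} = G_{k+n} with k = m+1-n >= 2 *)
  (forall n (v : V n), exists k, (2 <= k)%N /\
     exists v' v'' : V (Nat.add k n), [/\ v' <> v'', proj n k v' = v & proj n k v'' = v]) /\
  (* condition (ii): n = k+m > m *)
  (forall m, exists k, (1 <= k)%N /\
     forall g : V (Nat.add k m), exists w : V m, forall w' : V m,
       (exists g', E g g' /\ proj m k g' = w') <-> w' = w) /\
  (forall n (v : V n), 0 <= phiL v /\ phiL v <= phiU v /\ phiU v <= 1) /\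
  (forall n (v' : V n.+1), phiU v' <= phiU (Psi v')) /\
  (forall n (v' : V n.+1), phiL (Psi v') <= phiL v') /\
  (forall n (g : V n), exists g' : V n.+1,
     [/\ Psi g' = g, phiL g' = phiL g & phiU g' = phiU g]).

(* the Cantor space X, as a predicate on threads *)
Definition inX (x : forall n, V n) : Prop := forall n, x n = Psi (x n.+1).

Definition phiU_lim (x : forall n, V n) : R := limn (fun n => phiU (x n)).

Definition sn n (u v : V n) : R := phiU v / phiU u.

Definition Gamma (n : nat) : R :=
  \big[Num.max/0]_(u : V n) \big[Num.max/0]_(v : V n | E u v)
   \big[Num.max/0]_(u' : V n.+1 | Psi u' == u)
   \big[Num.max/0]_(v' : V n.+1 | (Psi v' == v) && E u' v')
     Num.max `|sn v u - sn v' u'| `|sn u v - sn u' v'|.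

Definition conditionGamma : Prop :=
  exists l : R, (series Gamma @ \oo --> l) /\ l < 1.

(* continuity of f : X -> R for the (product) topology of X:
   f(y) is close to f(x) as soon as y agrees with x on a long enough initial segment *)
Definition continuous_on_X (f : (forall n, V n) -> R) : Prop :=
  forall x, inX x -> forall e : R, 0 < e -> exists N : nat,
    forall y, inX y -> (forall i, (i <= N)%N -> y i = x i) -> `|f x - f y| < e.

End FSystem.

From Pilot Require Import Defs.
From mathcomp Require Import all_boot all_order all_algebra.
From mathcomp Require Import all_classical all_reals all_analysis.
From mathcomp Require Import lra.

Set Implicit Arguments.
Unset Strict Implicit.
Unset Printing Implicit Defensive.
Import Order.TTheory GRing.Theory Num.Theory numFieldNormedType.Exports.
Local Open Scope ring_scope.
Local Open Scope classical_set_scope.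

(* Along an orbit step x -> H_X(x), consecutive ratios s_n(x(n), H_X(x)(n))
   and s_{n+1}(x(n+1), H_X(x)(n+1)) are ratios along an edge of G_n and a
   lifted edge of G_{n+1}, so they differ by at most Gamma_n.  Condition Gamma
   makes these increments summable, uniformly in x: the ratios converge, and
   s(x) is within sum_{k >= m} Gamma_k of the m-th ratio.  By condition (ii)
   the m-th ratio depends only on a finite initial segment of x, which gives
   continuity.  The reciprocal ratios converge as well, so the limit, being
   nonnegative with a finite inverse, is positive. *)

Section SummableIncrements.
Variables (R : realType) (a G : R^nat) (l : R).
Hypothesis incr_le : forall n, `|a n.+1 - a n| <= G n.
Hypothesis cvg_series : series G @ \oo --> l.

Lemma series_le_lim n : series G n <= l.
Proof.
have G_ge0 k : 0 <= G k by exact: le_trans (incr_le k).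
have series_nd : nondecreasing_seq (series G).
  by apply: nondecreasing_series => k _ _.
have := nondecreasing_cvgn_le series_nd (cvgP _ cvg_series) n.
by rewrite (cvg_lim _ cvg_series).
Qed.

Lemma dist_le_sub_series q p : (q <= p)%N ->
  `|a p - a q| <= series G p - series G q.
Proof.
move=> le_qp; rewrite -(telescope_sumr a le_qp) sub_series_geq //.
by apply: le_trans (ler_norm_sum _ _ _) _; apply: ler_sum => k _.
Qed.

Lemma is_cvgn_summable_increments : cvgn a.
Proof.
have -> : a = (fun n => a 0%N + series (telescope a) n).
  by apply/funext => n; rewrite -eq_sum_telescope.
apply: is_cvgD; first exact: is_cvg_cst.
apply: normed_cvg; apply: nondecreasing_is_cvgn.
  by apply: (@nondecreasing_series _ (fun n => `|telescope a n|) xpredT 0).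
exists l => _ [n _ <-]; apply: le_trans (series_le_lim n).
by apply: ler_sum => k _; exact: incr_le.
Qed.

Lemma dist_limn_le q : `|limn a - a q| <= l - series G q.
Proof.
have cvg_dist : (fun p => `|a p - a q|) @ \oo --> `|limn a - a q|.
  exact: (cvg_norm (cvgB is_cvgn_summable_increments (cvg_cst (a q)))).
have cvg_sub_series : (fun p => series G p - series G q) @ \oo --> l - series G q.
  exact: (cvgB cvg_series (cvg_cst (series G q))).
apply: (ler_cvg_to cvg_dist cvg_sub_series).
by near=> p; apply: dist_le_sub_series; near: p; exact: nbhs_infty_ge.
Unshelve. all: by end_near.
Qed.

End SummableIncrements.

Lemma proj_thread (V : nat -> finType) (Psi : forall n, V n.+1 -> V n)
    (x : forall n, V n) : inX Psi x ->
  forall m k, Defs.proj Psi (n := m) (k := k) (x (Nat.add k m)) = x m.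
Proof. by move=> xX m; elim=> [//|k IH] /=; rewrite -(xX (Nat.add k m)). Qed.

Section OrbitRatio.
Variables (R : realType) (V : nat -> finType) (E : forall n, rel (V n)).
Variables (Psi : forall n, V n.+1 -> V n) (phiU : forall n, V n -> R).
Variable H : (forall n, V n) -> (forall n, V n).
Hypothesis phiU_gt0 : forall n (v : V n), 0 < phiU v.
Hypothesis phiU_Psi_ge : forall n (v : V n.+1), phiU v <= phiU (Psi v).
Hypothesis inX_H : forall x, inX Psi x -> inX Psi (H x).
Hypothesis edge_H : forall x, inX Psi x -> forall n, E (x n) (H x n).
Variable l : R.
Hypothesis cvg_series_Gamma : series (Gamma E Psi phiU) @ \oo --> l.

Lemma dist_sn_lift_le_Gamma n (u v : V n) (u' v' : V n.+1) :
  E u v -> E u' v' -> Psi u' = u -> Psi v' = v ->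
  `|sn phiU u v - sn phiU u' v'| <= Gamma E Psi phiU n /\
  `|sn phiU v u - sn phiU v' u'| <= Gamma E Psi phiU n.
Proof.
move=> Euv Eu'v' Psiu' Psiv'.
have le_max_Gamma : Num.max `|sn phiU v u - sn phiU v' u'|
                            `|sn phiU u v - sn phiU u' v'| <= Gamma E Psi phiU n.
  apply: (bigmax_sup u) => //; apply: (bigmax_sup v) => //.
  apply: (bigmax_sup u'); first by rewrite Psiu'.
  by apply: (bigmax_sup v'); rewrite ?Psiv' ?eqxx ?Eu'v'.
by split; apply: le_trans le_max_Gamma; rewrite le_max lexx ?orbT.
Qed.

Definition ratio_seq x n := sn phiU (x n) (H x n).
Definition inv_ratio_seq x n := sn phiU (H x n) (x n).
Definition ratio_lim x := limn (ratio_seq x).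

Lemma ratio_seq_incr_le x : inX Psi x -> forall n,
  `|ratio_seq x n.+1 - ratio_seq x n| <= Gamma E Psi phiU n /\
  `|inv_ratio_seq x n.+1 - inv_ratio_seq x n| <= Gamma E Psi phiU n.
Proof.
move=> xX n.
have [] := dist_sn_lift_le_Gamma (edge_H xX n) (edge_H xX n.+1)
  (esym (xX n)) (esym (inX_H xX n)).
by split; rewrite distrC.
Qed.

Lemma cvg_ratio_seq x : inX Psi x -> ratio_seq x @ \oo --> ratio_lim x.
Proof.
move=> xX; apply: (is_cvgn_summable_increments _ cvg_series_Gamma).
by move=> n; case: (ratio_seq_incr_le xX n).
Qed.

Lemma dist_ratio_lim_le x : inX Psi x -> forall q,
  `|ratio_lim x - ratio_seq x q| <= l - series (Gamma E Psi phiU) q.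
Proof.
move=> xX; apply: (dist_limn_le _ cvg_series_Gamma).
by move=> n; case: (ratio_seq_incr_le xX n).
Qed.

Lemma ratio_lim_gt0 x : inX Psi x -> 0 < ratio_lim x.
Proof.
move=> xX.
have cvg_inv : cvgn (inv_ratio_seq x).
  apply: (is_cvgn_summable_increments _ cvg_series_Gamma).
  by move=> n; case: (ratio_seq_incr_le xX n).
have ratio_mulV : ratio_seq x \* inv_ratio_seq x = cst 1.
  apply/funext => n; rewrite /= /ratio_seq /inv_ratio_seq /sn mulrA divfK.
    by rewrite divff // gt_eqF.
  by rewrite gt_eqF.
have lim_mulV : ratio_lim x * limn (inv_ratio_seq x) = 1.
  have cvg_one : (ratio_seq x \* inv_ratio_seq x) @ \oo -->
                 ratio_lim x * limn (inv_ratio_seq x).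
    exact: cvgM (cvg_ratio_seq xX) cvg_inv.
  rewrite ratio_mulV in cvg_one.
  by rewrite -(cvg_lim _ cvg_one) // lim_cst.
have ratio_lim_ge0 : 0 <= ratio_lim x.
  apply: (ler_cvg_to (cvg_cst 0) (cvg_ratio_seq xX)).
  by near=> n; rewrite ltW // divr_gt0.
rewrite lt_neqAle ratio_lim_ge0 andbT; apply/eqP => ratio_lim0.
by move: lim_mulV; rewrite -ratio_lim0 mul0r => /eqP; rewrite eq_sym oner_eq0.
Unshelve. all: by end_near.
Qed.

Definition proj_succ_unique m k (g : V (Nat.add k m)) : Prop :=
  exists w : V m, forall w' : V m,
    (exists g', E g g' /\ Defs.proj Psi (n := m) (k := k) g' = w') <-> w' = w.

Lemma H_eq_of_agree m k x y : inX Psi x -> inX Psi y ->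
  proj_succ_unique (x (Nat.add k m)) ->
  y (Nat.add k m) = x (Nat.add k m) -> H y m = H x m.
Proof.
move=> xX yX [w succ_w] yx.
have succ_H z : inX Psi z -> z (Nat.add k m) = x (Nat.add k m) -> H z m = w.
  move=> zX zx; apply/succ_w; exists (H z (Nat.add k m)).
  by rewrite -zx edge_H // proj_thread //; exact: inX_H.
by rewrite (succ_H y) ?(succ_H x).
Qed.

Lemma ratio_lim_continuous :
  (forall m, exists k, forall g : V (Nat.add k m), proj_succ_unique g) ->
  continuous_on_X Psi ratio_lim.
Proof.
move=> succ_det x xX e e_gt0.
have [m _ tail_m] := cvgr_dist_lt _ _ cvg_series_Gamma _ (divr_gt0 e_gt0 (ltr0Sn _ 1)).
have tail_small : l - series (Gamma E Psi phiU) m < e / 2.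
  exact: le_lt_trans (ler_norm _) (tail_m m (leqnn m)).
have [k det_k] := succ_det m.
exists (k + m)%N => y yX yx.
have ratio_eq : ratio_seq y m = ratio_seq x m.
  by rewrite /ratio_seq (yx m (leq_addl k m)) (H_eq_of_agree xX yX (det_k _) (yx _ _)).
have := dist_ratio_lim_le xX m; have := dist_ratio_lim_le yX m.
rewrite ratio_eq => dist_y dist_x.
apply: le_lt_trans (ler_distD (ratio_seq x m) _ _) _.
rewrite (distrC (ratio_seq x m)); lra.
Qed.

Lemma cvg_phiU_thread z : inX Psi z -> (fun n => phiU (z n)) @ \oo --> phiU_lim phiU z.
Proof.
move=> zX; apply: nonincreasing_is_cvgn.
  by apply/nonincreasing_seqP => n; rewrite (zX n); exact: phiU_Psi_ge.
by exists 0 => _ [n _ <-]; exact: ltW.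
Qed.

Lemma ratio_lim_eq x : inX Psi x -> phiU_lim phiU x != 0 ->
  ratio_lim x = phiU_lim phiU (H x) / phiU_lim phiU x.
Proof.
move=> xX phiU_x_neq0.
have cvg_quot : ratio_seq x @ \oo --> phiU_lim phiU (H x) / phiU_lim phiU x.
  apply: cvgM; first exact/cvg_phiU_thread/inX_H.
  exact: cvgV phiU_x_neq0 (cvg_phiU_thread xX).
by rewrite /ratio_lim (cvg_lim _ cvg_quot).
Qed.

End OrbitRatio.

Theorem lemma5p3 (R : realType) (V : nat -> finType) (E : forall n, rel (V n))
  (Psi : forall n, V n.+1 -> V n) (phiL phiU : forall n, V n -> R)
  (H : (forall n, V n) -> (forall n, V n)) :
  Fsystem E Psi phiL phiU ->
  (forall n (v : V n), 0 < phiU n v) ->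
  conditionGamma E Psi phiU ->
  (* H is H_X: the map X -> X whose graph is {(x,y) : x(n) y(n) is an edge of G_n for all n} *)
  (forall x, inX Psi x -> inX Psi (H x)) ->
  (forall x y, inX Psi x -> inX Psi y -> ((forall n, E n (x n) (y n)) <-> y = H x)) ->
  exists s : (forall n, V n) -> R,
    (forall x, inX Psi x -> (fun n => sn phiU (x n) (H x n)) @ \oo --> s x) /\
    continuous_on_X Psi s /\
    (forall x, inX Psi x -> 0 < s x) /\
    (forall x, inX Psi x -> phiU_lim phiU x != 0 ->
       s x = phiU_lim phiU (H x) / phiU_lim phiU x).
Proof.
move=> [_ [_ [_ [_ [_ [_ [succ_det [_ [phiU_Psi_ge _]]]]]]]]] phiU_gt0 [l [cvg_Gamma _]]
  inX_H graph_H.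
have edge_H x : inX Psi x -> forall n, E n (x n) (H x n).
  by move=> xX; apply/(graph_H x (H x) xX (inX_H x xX)).
have proj_succ_det m :
    exists k, forall g : V (Nat.add k m), proj_succ_unique E Psi g.
  by have [k [_ det_k]] := succ_det m; exists k.
exists (ratio_lim phiU H); split; [|split; [|split]].
- exact: cvg_ratio_seq cvg_Gamma.
- exact: ratio_lim_continuous cvg_Gamma proj_succ_det.
- exact: ratio_lim_gt0 cvg_Gamma.
- by move=> x; apply: ratio_lim_eq.
Qed.
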